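(* If $g,h,gh\in\mathcal{G}$ ($g$ and $h$ are composable) then $$\mathrm{rot}(\Delta_g) = \Delta_g: H_g \to H_g \diamond H_g,$$ $$\mathrm{rot}(m_{g,h}) = \bar S_{\bar g} \circ m_{h,\bar h \bar g} \circ (\mathrm{id}_g \diamond S_{gh}) : H_h \diamond H_{gh} \to H_g.$$
   Context: Let $\mathcal{G}$ be a groupoid and $\mathcal{H}(\mathcal{G})$ the free braided monoidal category (product $\diamond$, unit $\mathbf{1}$, braiding $\gamma$) generated by a Hopf $\mathcal{G}$-algebra $H=\{H_g\}_{g\in\mathcal{G}}$ (comultiplications $\Delta_g:H_g\to H_g\diamond H_g$, counits $\epsilon_g$, multiplications $m_{g,h}:H_g\diamond H_h\to H_{gh}$, units $\eta_i$, antipodes $S_g:H_g\to H_{\bar g}$ with inverses $\bar S_g$) with a left cointegral $l=\{l_i:H_{1_i}\to\mathbf{1}\}$ and a right integral $L=\{L_g:\mathbf{1}\to H_g\}$ such that $l_i\circ L_{1_i}=\mathrm{id}_{\mathbf{1}}=l_i\circ S_{1_i}\circ L_{1_i}$. $\mathcal{H}(\mathcal{G})$ is autonomous with $H_g^\ast=H_g$, coform $\Lambda_g=\Delta_g\circ L_g:\mathbf{1}\to H_g\diamond H_g$ and form $\lambda_g=l_i\circ m_{g,\bar g}\circ(\mathrm{id}_g\diamond S_g):H_g\diamond H_g\to\mathbf{1}$ for $g\in\mathcal{G}(i,j)$. Writing $\mathrm{Mor}(A,B)$ for the morphisms $A\to B$ in $\mathcal{H}(\mathcal{G})$, the rotation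 map $\mathrm{rot}:\mathrm{Mor}(H_g\diamond A,B\diamond H_h)\to\mathrm{Mor}(A\diamond H_h,H_g\diamond B)$ is defined by $$\mathrm{rot}(F)=(\mathrm{id}_{H_g\diamond B}\diamond\lambda_h)\circ(\mathrm{id}_g\diamond F\diamond\mathrm{id}_h)\circ(\Lambda_g\diamond\mathrm{id}_{A\diamond H_h}).$$ Here $\Delta_g$ is regarded as a morphism $H_g\diamond\mathbf{1}\to H_g\diamond H_g$ and $m_{g,h}$ as a morphism $H_g\diamond H_h\to\mathbf{1}\diamond H_{gh}$. *)

(* Encoding of the free braided monoidal category H(G) generated
   by a Hopf G-algebra with integrals: an equation between morphisms holds in the
   free category iff it holds in every strict braided monoidal category equipped
   with such a structure.  We use strict braided monoidal categories whose object
   monoid is the free monoid (lists, concatenation) on the generators H_g, g in G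
   (the free category H(G) is of this form). *)
From Stdlib Require Import List.
Import ListNotations.

(* ---------- Groupoids (diagrammatic composition: gcomp g h = "gh") ---------- *)
Record Groupoid : Type := {
  gob : Type;
  ghom : gob -> gob -> Type;
  gid : forall i, ghom i i;
  gcomp : forall i j k, ghom i j -> ghom j k -> ghom i k;
  ginv : forall i j, ghom i j -> ghom j i;
  gassoc : forall i j k l (f : ghom i j) (g : ghom j k) (h : ghom k l),
      gcomp _ _ _ (gcomp _ _ _ f g) h = gcomp _ _ _ f (gcomp _ _ _ g h);
  gidl : forall i j (f : ghom i j), gcomp _ _ _ (gid i) f = f;
  gidr : forall i j (f : ghom i j), gcomp _ _ _ f (gid j) = f;
  ginvr : forall i j (f : ghom i j), gcomp _ _ _ f (ginv _ _ f) = gid i;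
  ginvl : forall i j (f : ghom i j), gcomp _ _ _ (ginv _ _ f) f = gid j
}.
Arguments ghom G i j : rename.
Arguments gid {G} i : rename.
Arguments gcomp {G i j k} _ _ : rename.
Arguments ginv {G i j} _ : rename.
Arguments gassoc G {i j k l} f g h : rename.
Arguments gidl G {i j} f : rename.
Arguments gidr G {i j} f : rename.
Arguments ginvr G {i j} f : rename.
Arguments ginvl G {i j} f : rename.

Lemma ginv_id (G : Groupoid) (i : gob G) : ginv (gid i) = gid i.
Proof.
  rewrite <- (gidl G (ginv (gid i))). apply ginvr.
Qed.

Lemma ginv_comp (G : Groupoid) (i j k : gob G) (g : ghom G i j) (h : ghom G j k) :
  ginv (gcomp g h) = gcomp (ginv h) (ginv g).
Proof.
  assert (E : gcomp (gcomp g h) (gcomp (ginv h) (ginv g)) = gid i).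
  { rewrite gassoc, <- (gassoc G h), ginvr, gidl, ginvr. reflexivity. }
  rewrite <- (gidr G (ginv (gcomp g h))), <- E, <- gassoc, ginvl, gidl.
  reflexivity.
Qed.

Lemma gcomp_cancel (G : Groupoid) (i j k : gob G) (g : ghom G i j) (h : ghom G j k) :
  gcomp h (gcomp (ginv h) (ginv g)) = ginv g.
Proof. rewrite <- gassoc, ginvr, gidl. reflexivity. Qed.

Definition gen (G : Groupoid) : Type :=
  { p : gob G * gob G & ghom G (fst p) (snd p) }.
Definition Hob {G : Groupoid} {i j : gob G} (g : ghom G i j) : list (gen G) :=
  [existT (fun p : gob G * gob G => ghom G (fst p) (snd p)) (i, j) g].

(* transparent list identities (so that casts compute on concrete lists) *)
Fixpoint app_nil_rT {X : Type} (l : list X) : l ++ [] = l :=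
  match l as l0 return l0 ++ [] = l0 with
  | [] => eq_refl
  | x :: l' => f_equal (cons x) (app_nil_rT l')
  end.
Fixpoint app_assocT {X : Type} (a b c : list X) : a ++ (b ++ c) = (a ++ b) ++ c :=
  match a as a0 return a0 ++ (b ++ c) = (a0 ++ b) ++ c with
  | [] => eq_refl
  | x :: a' => f_equal (cons x) (app_assocT a' b c)
  end.

Record BCat (X : Type) : Type := {
  Mor : list X -> list X -> Type;
  comp : forall a b c, Mor b c -> Mor a b -> Mor a c;   (* comp f g = f o g *)
  idm : forall a, Mor a a;
  tens : forall a b c d, Mor a b -> Mor c d -> Mor (a ++ c) (b ++ d);
  braid : forall a b, Mor (a ++ b) (b ++ a)
}.
Arguments Mor {X} _ _ _.
Arguments comp {X} _ {a b c} _ _.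
Arguments idm {X} _ _.
Arguments tens {X} _ {a b c d} _ _.
Arguments braid {X} _ _ _.

Definition castm {X : Type} (C : BCat X) {A A' B B' : list X}
  (e1 : A = A') (e2 : B = B') (f : Mor C A B) : Mor C A' B' :=
  match e1 in _ = A0 return Mor C A0 B' with
  | eq_refl => match e2 in _ = B0 return Mor C A B0 with eq_refl => f end
  end.

Record IsBraidedStrict {X : Type} (C : BCat X) : Prop := {
  comp_assoc : forall A B D E (f : Mor C D E) (g : Mor C B D) (h : Mor C A B),
      comp C f (comp C g h) = comp C (comp C f g) h;
  comp_idl : forall A B (f : Mor C A B), comp C (idm C B) f = f;
  comp_idr : forall A B (f : Mor C A B), comp C f (idm C A) = f;
  tens_id : forall A B, tens C (idm C A) (idm C B) = idm C (A ++ B);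
  tens_comp : forall A B D A' B' D' (f : Mor C B D) (f' : Mor C A B)
      (g : Mor C B' D') (g' : Mor C A' B'),
      tens C (comp C f f') (comp C g g') = comp C (tens C f g) (tens C f' g');
  tens_assoc : forall A B A' B' A'' B'' (f : Mor C A B) (g : Mor C A' B')
      (h : Mor C A'' B''),
      tens C (tens C f g) h
      = castm C (app_assocT A A' A'') (app_assocT B B' B'') (tens C f (tens C g h));
  tens_unitl : forall A B (f : Mor C A B), tens C (idm C []) f = f;
  tens_unitr : forall A B (f : Mor C A B),
      tens C f (idm C []) = castm C (eq_sym (app_nil_rT A)) (eq_sym (app_nil_rT B)) f;
  braid_nat : forall A B A' B' (f : Mor C A B) (g : Mor C A' B'),
      comp C (braid C B B') (tens C f g) = comp C (tens C g f) (braid C A A');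
  braid_iso : forall A B, exists b : Mor C (B ++ A) (A ++ B),
      comp C (braid C A B) b = idm C (B ++ A) /\ comp C b (braid C A B) = idm C (A ++ B);
  hexagon1 : forall A B D,
      braid C A (B ++ D)
      = comp C (castm C eq_refl (app_assocT B D A) (tens C (idm C B) (braid C A D)))
               (castm C (eq_sym (app_assocT A B D)) (eq_sym (app_assocT B A D))
                        (tens C (braid C A B) (idm C D)));
  hexagon2 : forall A B D,
      braid C (A ++ B) D
      = comp C (castm C eq_refl (eq_sym (app_assocT D A B)) (tens C (braid C A D) (idm C B)))
               (castm C (app_assocT A B D) (app_assocT A D B)
                        (tens C (idm C A) (braid C B D)))
}.

Definition hcast {G : Groupoid} (C : BCat (gen G)) {i j : gob G} {g g' : ghom G i j}
  (e : g = g') : Mor C (Hob g) (Hob g') :=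
  match e in _ = y return Mor C (Hob g) (Hob y) with eq_refl => idm C (Hob g) end.

Record HopfGAlg {G : Groupoid} (C : BCat (gen G)) : Type := {
  Delta : forall i j (g : ghom G i j), Mor C (Hob g) (Hob g ++ Hob g);
  eps : forall i j (g : ghom G i j), Mor C (Hob g) [];
  mul : forall i j k (g : ghom G i j) (h : ghom G j k),
      Mor C (Hob g ++ Hob h) (Hob (gcomp g h));
  eta : forall i, Mor C [] (Hob (gid i));
  ant : forall i j (g : ghom G i j), Mor C (Hob g) (Hob (ginv g));
  antinv : forall i j (g : ghom G i j), Mor C (Hob (ginv g)) (Hob g);
  mul_assoc : forall i j k l (g : ghom G i j) (h : ghom G j k) (f : ghom G k l),
      comp C (mul _ _ _ (gcomp g h) f) (tens C (mul _ _ _ g h) (idm C (Hob f)))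
      = comp C (hcast C (eq_sym (gassoc G g h f)))
          (comp C (mul _ _ _ g (gcomp h f)) (tens C (idm C (Hob g)) (mul _ _ _ h f)));
  mul_unitl : forall i j (g : ghom G i j),
      comp C (hcast C (gidl G g))
        (comp C (mul _ _ _ (gid i) g) (tens C (eta i) (idm C (Hob g)))) = idm C (Hob g);
  mul_unitr : forall i j (g : ghom G i j),
      comp C (hcast C (gidr G g))
        (comp C (mul _ _ _ g (gid j)) (tens C (idm C (Hob g)) (eta j))) = idm C (Hob g);
  coassoc : forall i j (g : ghom G i j),
      comp C (tens C (Delta _ _ g) (idm C (Hob g))) (Delta _ _ g)
      = comp C (tens C (idm C (Hob g)) (Delta _ _ g)) (Delta _ _ g);
  counitl : forall i j (g : ghom G i j),
      comp C (tens C (eps _ _ g) (idm C (Hob g))) (Delta _ _ g) = idm C (Hob g);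
  counitr : forall i j (g : ghom G i j),
      comp C (tens C (idm C (Hob g)) (eps _ _ g)) (Delta _ _ g) = idm C (Hob g);
  bialg_mul : forall i j k (g : ghom G i j) (h : ghom G j k),
      comp C (Delta _ _ (gcomp g h)) (mul _ _ _ g h)
      = comp C (tens C (mul _ _ _ g h) (mul _ _ _ g h))
          (comp C (tens C (tens C (idm C (Hob g)) (braid C (Hob g) (Hob h))) (idm C (Hob h)))
                  (tens C (Delta _ _ g) (Delta _ _ h)));
  bialg_eps : forall i j k (g : ghom G i j) (h : ghom G j k),
      comp C (eps _ _ (gcomp g h)) (mul _ _ _ g h) = tens C (eps _ _ g) (eps _ _ h);
  bialg_unit : forall i, comp C (Delta _ _ (gid i)) (eta i) = tens C (eta i) (eta i);
  bialg_counit : forall i, comp C (eps _ _ (gid i)) (eta i) = idm C [];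
  antipode_r : forall i j (g : ghom G i j),
      comp C (hcast C (ginvr G g))
        (comp C (mul _ _ _ g (ginv g)) (comp C (tens C (idm C (Hob g)) (ant _ _ g)) (Delta _ _ g)))
      = comp C (eta i) (eps _ _ g);
  antipode_l : forall i j (g : ghom G i j),
      comp C (hcast C (ginvl G g))
        (comp C (mul _ _ _ (ginv g) g) (comp C (tens C (ant _ _ g) (idm C (Hob g))) (Delta _ _ g)))
      = comp C (eta j) (eps _ _ g);
  antinv_l : forall i j (g : ghom G i j), comp C (antinv _ _ g) (ant _ _ g) = idm C (Hob g);
  antinv_r : forall i j (g : ghom G i j),
      comp C (ant _ _ g) (antinv _ _ g) = idm C (Hob (ginv g))
}.
Arguments Delta {G C} _ {i j} g.
Arguments eps {G C} _ {i j} g.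
Arguments mul {G C} _ {i j k} g h.
Arguments eta {G C} _ i.
Arguments ant {G C} _ {i j} g.
Arguments antinv {G C} _ {i j} g.

Definition is_left_cointegral {G : Groupoid} {C : BCat (gen G)} (HA : HopfGAlg C)
  (l : forall i : gob G, Mor C (Hob (gid i)) []) : Prop :=
  forall i, comp C (tens C (idm C (Hob (gid i))) (l i)) (Delta HA (gid i))
            = comp C (eta HA i) (l i).

Definition is_right_integral {G : Groupoid} {C : BCat (gen G)} (HA : HopfGAlg C)
  (L : forall i j (g : ghom G i j), Mor C [] (Hob g)) : Prop :=
  forall i j k (g : ghom G i j) (h : ghom G j k),
    comp C (mul HA g h) (tens C (L _ _ g) (idm C (Hob h)))
    = tens C (L _ _ (gcomp g h)) (eps HA h).

Definition coform {G : Groupoid} {C : BCat (gen G)} (HA : HopfGAlg C)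
  (L : forall i j (g : ghom G i j), Mor C [] (Hob g)) {i j} (g : ghom G i j)
  : Mor C [] (Hob g ++ Hob g) :=
  comp C (Delta HA g) (L _ _ g).

Definition form {G : Groupoid} {C : BCat (gen G)} (HA : HopfGAlg C)
  (l : forall i : gob G, Mor C (Hob (gid i)) []) {i j} (g : ghom G i j)
  : Mor C (Hob g ++ Hob g) [] :=
  comp C (l i) (comp C (hcast C (ginvr G g))
                  (comp C (mul HA g (ginv g)) (tens C (idm C (Hob g)) (ant HA g)))).

Definition rot {G : Groupoid} {C : BCat (gen G)} (HA : HopfGAlg C)
  (l : forall i : gob G, Mor C (Hob (gid i)) [])
  (L : forall i j (g : ghom G i j), Mor C [] (Hob g))
  {i j k m : gob G} (g : ghom G i j) (h : ghom G k m) (A B : list (gen G))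
  (F : Mor C (Hob g ++ A) (B ++ Hob h)) : Mor C (A ++ Hob h) (Hob g ++ B) :=
  comp C
    (castm C (f_equal (cons (existT (fun p : gob G * gob G => ghom G (fst p) (snd p)) (i, j) g))
                       (app_assocT B (Hob h) (Hob h)))
             (app_nil_rT (Hob g ++ B))
             (tens C (idm C (Hob g ++ B)) (form HA l h)))
    (comp C (tens C (tens C (idm C (Hob g)) F) (idm C (Hob h)))
            (tens C (coform HA L g) (idm C (A ++ Hob h)))).

(* Everything rests on the snake identity (id ⊗ λ_g)(Λ_g ⊗ id) = id for the
   coform Λ_g = Δ_g L_g and the form λ_g(x ⊗ y) = l(x S(y)).  As L is a right
   integral, Λ_g ε_g(x) = Δ_g(L_{1_i} x).  Expanding Δ_g of this product,
   coassociativity and the antipode axiom (λ_g(a x₁ ⊗ x₂) = l(a) ε(x)) turn the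
   snake into x ↦ L₍₁₎ x l(L₍₂₎) with L = L_{1_i}, which is x because l is a left
   cointegral with l(L_{1_i}) = 1.
   Then rot(Δ_g) = Δ_g is coassociativity followed by the snake identity.  For
   the product, associativity rewrites λ_{gh}(m(x ⊗ y) ⊗ z) as l(x T(y ⊗ z)) with
   T(y ⊗ z) = y S_{gh}(z), and the snake of the pairing (x, w) ↦ l(x w) is S̄_g,
   since composing it with S_g gives the snake of λ_g. *)

From Stdlib Require Import List ssreflect ProofIrrelevance Eqdep.
Import ListNotations.

Existing Class IsBraidedStrict.

Section StrictBraided.
Context {X : Type} {C : BCat X} `{HC : IsBraidedStrict X C}.

Local Notation "f ∘ g" := (comp C f g) (at level 40, left associativity).
Local Notation "f ⊗ g" := (tens C f g) (at level 35).
Local Notation "1[ A ]" := (idm C A).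

Lemma castm_id {A B} (e1 : A = A) (e2 : B = B) (f : Mor C A B) : castm C e1 e2 f = f.
Proof. by rewrite (UIP_refl _ _ e1) (UIP_refl _ _ e2). Qed.

Lemma compA {A B D E} (f : Mor C D E) (g : Mor C B D) (h : Mor C A B) :
  f ∘ (g ∘ h) = f ∘ g ∘ h.
Proof. exact: (comp_assoc _ HC). Qed.

Lemma id_comp {A B} (f : Mor C A B) : 1[B] ∘ f = f.
Proof. exact: (comp_idl _ HC). Qed.

Lemma comp_id {A B} (f : Mor C A B) : f ∘ 1[A] = f.
Proof. exact: (comp_idr _ HC). Qed.

Lemma tens_idm A B : 1[A] ⊗ 1[B] = 1[A ++ B].
Proof. exact: (tens_id _ HC). Qed.

Lemma tensM {A B D A' B' D'} (f : Mor C B D) (f' : Mor C A B) (g : Mor C B' D')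
    (g' : Mor C A' B') :
  (f ∘ f') ⊗ (g ∘ g') = (f ⊗ g) ∘ (f' ⊗ g').
Proof. exact: (tens_comp _ HC). Qed.

Lemma tens_nil_l {A B} (f : Mor C A B) : 1[[]] ⊗ f = f.
Proof. exact: (tens_unitl _ HC). Qed.

Lemma tensMl {A B D} A' (f : Mor C B D) (f' : Mor C A B) :
  (f ∘ f') ⊗ 1[A'] = (f ⊗ 1[A']) ∘ (f' ⊗ 1[A']).
Proof. by rewrite -tensM id_comp. Qed.

Lemma tensMr {A B D} A' (f : Mor C B D) (f' : Mor C A B) :
  1[A'] ⊗ (f ∘ f') = (1[A'] ⊗ f) ∘ (1[A'] ⊗ f').
Proof. by rewrite -tensM id_comp. Qed.

Lemma eq_comp2 {B D E F} {a : Mor C D E} {b : Mor C B D} {c : Mor C B E}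
    (p : Mor C E F) :
  a ∘ b = c -> p ∘ a ∘ b = p ∘ c.
Proof. by move=> <-; rewrite compA. Qed.

Lemma eq_comp3 {B D E F K} {a : Mor C E F} {b : Mor C D E} {c : Mor C B D}
    {d : Mor C B F} (p : Mor C F K) :
  a ∘ b ∘ c = d -> p ∘ a ∘ b ∘ c = p ∘ d.
Proof. by move=> <-; rewrite !compA. Qed.

Lemma tens_xchl {A B A' B'} (f : Mor C A B) (g : Mor C A' B') :
  f ⊗ g = (f ⊗ 1[B']) ∘ (1[A] ⊗ g).
Proof. by rewrite -tensM id_comp comp_id. Qed.

Lemma tens_xchr {A B A' B'} (f : Mor C A B) (g : Mor C A' B') :
  f ⊗ g = (1[B] ⊗ g) ∘ (f ⊗ 1[A']).
Proof. by rewrite -tensM id_comp comp_id. Qed.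

Lemma tens_swap {A B A' B'} (f : Mor C A B) (g : Mor C A' B') :
  (1[B] ⊗ g) ∘ (f ⊗ 1[A']) = (f ⊗ 1[B']) ∘ (1[A] ⊗ g).
Proof. by rewrite -tens_xchl -tens_xchr. Qed.

Lemma tens_idA {A B} (x : X) D (f : Mor C A B) :
  1[[x] ++ D] ⊗ f = 1[[x]] ⊗ (1[D] ⊗ f).
Proof. by rewrite -tens_idm (tens_assoc _ HC) castm_id. Qed.

Lemma braid_nil_l (x : X) : braid C [] [x] = 1[[x]].
Proof.
have H := hexagon2 _ HC [] [] [x].
rewrite !castm_id tens_nil_l (tens_unitr _ HC) castm_id in H.
have [b [Hb _]] := braid_iso _ HC [] [x].
by rewrite -[LHS]comp_id -Hb compA -H.
Qed.

Lemma braid_counit {A} (x : X) (f : Mor C A []) :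
  (1[[x]] ⊗ f) ∘ braid C A [x] = f ⊗ 1[[x]].
Proof. by rewrite -(braid_nat _ HC) braid_nil_l id_comp. Qed.

End StrictBraided.

Section HopfGAlgebra.
Context {G : Groupoid} (C : BCat (gen G)) `{HC : IsBraidedStrict _ C} (HA : HopfGAlg C).

Local Notation "f ∘ g" := (comp C f g) (at level 40, left associativity).
Local Notation "f ⊗ g" := (tens C f g) (at level 35).
Local Notation "1[ A ]" := (idm C A).

Lemma hcast_irr {i j} {a b : ghom G i j} (e e' : a = b) : hcast C e = hcast C e'.
Proof. by rewrite (proof_irrelevance _ e e'). Qed.

Lemma hcast_refl {i j} {a : ghom G i j} (e : a = a) : hcast C e = 1[Hob a].
Proof. by rewrite (proof_irrelevance _ e eq_refl). Qed.

Lemma hcast_trans {i j} {a b c : ghom G i j} (e1 : a = b) (e2 : b = c) :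
  hcast C e2 ∘ hcast C e1 = hcast C (eq_trans e1 e2).
Proof. by case: _ / e2 => /=; rewrite id_comp. Qed.

Lemma Delta_hcast {i j} {a b : ghom G i j} (e : a = b) :
  Delta HA b ∘ hcast C e = (hcast C e ⊗ hcast C e) ∘ Delta HA a.
Proof. by case: _ / e => /=; rewrite tens_idm id_comp comp_id. Qed.

Lemma family_hcast (L : forall i j (g : ghom G i j), Mor C [] (Hob g))
    {i j} {a b : ghom G i j} (e : a = b) :
  L _ _ b = hcast C e ∘ L _ _ a.
Proof. by case: _ / e => /=; rewrite id_comp. Qed.

Lemma mul_hcastr {i j k} {a : ghom G i j} {b b' : ghom G j k} (e : b = b') :
  mul HA a b' ∘ (1[Hob a] ⊗ hcast C e) = hcast C (f_equal (gcomp a) e) ∘ mul HA a b.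
Proof. by case: _ / e => /=; rewrite tens_idm id_comp comp_id. Qed.

Lemma mul_hcastl {i j k} {a a' : ghom G i j} {b : ghom G j k} (e : a = a') :
  mul HA a' b ∘ (hcast C e ⊗ 1[Hob b]) =
  hcast C (f_equal (fun x => gcomp x b) e) ∘ mul HA a b.
Proof. by case: _ / e => /=; rewrite tens_idm id_comp comp_id. Qed.

Lemma mulA {i j k m} (g : ghom G i j) (h : ghom G j k) (f : ghom G k m) :
  mul HA (gcomp g h) f ∘ (mul HA g h ⊗ 1[Hob f])
  = hcast C (eq_sym (gassoc G g h f)) ∘ mul HA g (gcomp h f) ∘ (1[Hob g] ⊗ mul HA h f).
Proof. by rewrite (mul_assoc _ HA) compA. Qed.

Lemma mul1r {i j} (g : ghom G i j) :
  hcast C (gidr G g) ∘ mul HA g (gid j) ∘ (1[Hob g] ⊗ eta HA j) = 1[Hob g].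
Proof. by rewrite -compA (mul_unitr _ HA). Qed.

Lemma mul1l {i j} (g : ghom G i j) :
  hcast C (gidl G g) ∘ mul HA (gid i) g ∘ (eta HA i ⊗ 1[Hob g]) = 1[Hob g].
Proof. by rewrite -compA (mul_unitl _ HA). Qed.

Lemma antipodeE {i j} (g : ghom G i j) :
  mul HA g (ginv g) ∘ (1[Hob g] ⊗ ant HA g) ∘ Delta HA g
  = hcast C (eq_sym (ginvr G g)) ∘ eta HA i ∘ eps HA g.
Proof.
rewrite -compA -(id_comp (_ ∘ _)).
rewrite -(hcast_refl (eq_trans (ginvr G g) (eq_sym (ginvr G g)))).
by rewrite -hcast_trans -!compA (antipode_r _ HA).
Qed.

Definition lact {i j} (g : ghom G i j) : Mor C (Hob (gid i) ++ Hob g) (Hob g) :=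
  hcast C (gidl G g) ∘ mul HA (gid i) g.

Section Integrals.
Context (l : forall i : gob G, Mor C (Hob (gid i)) [])
  (L : forall i j (g : ghom G i j), Mor C [] (Hob g))
  (Hl : is_left_cointegral HA l)
  (HL : is_right_integral HA L)
  (HlL : forall i : gob G, comp C (l i) (L _ _ (gid i)) = idm C []).

Lemma form_lact_Delta {i j} (g : ghom G i j) :
  form HA l g ∘ (lact g ⊗ 1[Hob g]) ∘ (1[Hob (gid i)] ⊗ Delta HA g) = l i ⊗ eps HA g.
Proof.
rewrite /form /lact !compA.
rewrite (eq_comp2 _ (tens_swap _ _)) (tensMl _ (hcast _ _)) !compA.
rewrite (eq_comp2 _ (mul_hcastl _)) !compA (eq_comp2 _ (mulA _ _ _)) !compA.
rewrite (tens_idA _ (Hob g) (ant HA g)) !(eq_comp2 _ (eq_sym (tensMr _ _ _))).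
rewrite (compA (mul _ _ _)) antipodeE !tensMr !compA (eq_comp2 _ (mul_hcastr _)) !compA.
rewrite !(eq_comp2 _ (hcast_trans _ _)) (hcast_irr _ (gidr G (gid i))) (eq_comp3 _ (mul1r _)).
by rewrite comp_id (tens_xchl (l i)) (tens_unitr _ HC) castm_id.
Qed.

Lemma Delta_lact {i j} (g : ghom G i j) :
  Delta HA g ∘ lact g =
  (lact g ⊗ lact g) ∘ ((1[Hob (gid i)] ⊗ braid C (Hob (gid i)) (Hob g)) ⊗ 1[Hob g])
  ∘ (Delta HA (gid i) ⊗ Delta HA g).
Proof. by rewrite /lact compA Delta_hcast -compA (bialg_mul _ HA) tensM !compA. Qed.

Lemma lact_integral {i j} (g : ghom G i j) :
  lact g ∘ (L _ _ (gid i) ⊗ 1[Hob g]) = L _ _ g ∘ eps HA g.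
Proof.
rewrite /lact -compA HL (family_hcast L (gidl G g)) -compA.
by rewrite tens_xchl tens_nil_l (tens_unitr _ HC) castm_id.
Qed.

Lemma lact_cointegral {i j} (g : ghom G i j) :
  lact g ∘ (1[Hob (gid i)] ⊗ (l i ⊗ 1[Hob g])) ∘ (Delta HA (gid i) ⊗ 1[Hob g])
  = l i ⊗ 1[Hob g].
Proof.
have -> : 1[Hob (gid i)] ⊗ (l i ⊗ 1[Hob g]) = (1[Hob (gid i)] ⊗ l i) ⊗ 1[Hob g].
  by rewrite (tens_assoc _ HC) castm_id.
rewrite -compA -(tensMl _ (1[Hob (gid i)] ⊗ l i)) Hl tensMl compA.
by rewrite /lact mul1l id_comp.
Qed.

Lemma snake_lactE {i j} (g : ghom G i j) :
  (1[Hob g] ⊗ form HA l g) ∘ ((Delta HA g ∘ lact g) ⊗ 1[Hob g])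
  ∘ (1[Hob (gid i)] ⊗ Delta HA g)
  = (lact g ⊗ (l i ⊗ eps HA g))
    ∘ (1[Hob (gid i)] ⊗ (braid C (Hob (gid i)) (Hob g) ⊗ 1[Hob g]))
    ∘ (Delta HA (gid i) ⊗ Delta HA g).
Proof.
set γ := braid C (Hob (gid i)) (Hob g).
have coassoc_step :
    (Delta HA (gid i) ⊗ Delta HA g) ⊗ 1[Hob g] ∘ (1[Hob (gid i)] ⊗ Delta HA g)
    = (1[Hob (gid i) ++ Hob (gid i)] ⊗ (1[Hob g] ⊗ Delta HA g))
      ∘ (Delta HA (gid i) ⊗ Delta HA g).
  rewrite (tens_assoc _ HC) castm_id -(tensM (Delta HA (gid i)) _ (Delta HA g ⊗ _)).
  by rewrite -tensM comp_id id_comp (coassoc _ HA).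
have braid_step :
    ((1[Hob (gid i)] ⊗ γ) ⊗ 1[Hob g]) ⊗ 1[Hob g]
    ∘ (1[Hob (gid i) ++ Hob (gid i)] ⊗ (1[Hob g] ⊗ Delta HA g))
    = (1[Hob (gid i)] ⊗ (1[Hob g ++ Hob (gid i)] ⊗ Delta HA g))
      ∘ (1[Hob (gid i)] ⊗ (γ ⊗ 1[Hob g])).
  rewrite !(tens_assoc _ HC) !castm_id tens_idm (tens_idA _ (Hob (gid i))).
  rewrite -(tensMr (Hob (gid i)) (γ ⊗ 1[Hob g ++ Hob g])
              (1[Hob (gid i)] ⊗ (1[Hob g] ⊗ Delta HA g))).
  rewrite -(tensMr (Hob (gid i)) (1[Hob g ++ Hob (gid i)] ⊗ Delta HA g) (γ ⊗ 1[Hob g])).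
  rewrite -(tens_idA _ (Hob g) (Delta HA g)).
  by rewrite -(tens_xchl γ (Delta HA g)) -(tens_xchr γ (Delta HA g)).
have act_step :
    (lact g ⊗ lact g) ⊗ 1[Hob g]
    ∘ (1[Hob (gid i)] ⊗ (1[Hob g ++ Hob (gid i)] ⊗ Delta HA g))
    = lact g ⊗ ((lact g ⊗ 1[Hob g]) ∘ (1[Hob (gid i)] ⊗ Delta HA g)).
  rewrite (tens_assoc _ HC) castm_id -[in RHS](comp_id (lact g)) tensM.
  by rewrite comp_id (tens_idA _ (Hob g)) (tens_idA _ (Hob (gid i)) (Delta HA g)).
have form_step (Y : Mor C (Hob (gid i) ++ Hob g) (Hob g ++ Hob g)) :
    (1[Hob g] ⊗ form HA l g) ∘ (lact g ⊗ Y) = lact g ⊗ (form HA l g ∘ Y).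
  by rewrite -[in RHS](id_comp (lact g)) tensM.
rewrite Delta_lact !tensMl !compA (eq_comp2 _ coassoc_step) !compA.
rewrite (eq_comp2 _ braid_step) compA (eq_comp2 _ act_step) form_step compA.
by rewrite form_lact_Delta.
Qed.

Lemma lact_cointegral_braid_counit {i j} (g : ghom G i j) :
  (lact g ⊗ (l i ⊗ eps HA g))
  ∘ (1[Hob (gid i)] ⊗ (braid C (Hob (gid i)) (Hob g) ⊗ 1[Hob g]))
  ∘ (Delta HA (gid i) ⊗ Delta HA g)
  = l i ⊗ 1[Hob g].
Proof.
set γ := braid C (Hob (gid i)) (Hob g).
have counit_step :
    (1[Hob (gid i) ++ Hob g] ⊗ (1[Hob (gid i)] ⊗ eps HA g))
    ∘ (1[Hob (gid i)] ⊗ (γ ⊗ 1[Hob g])) ∘ (Delta HA (gid i) ⊗ Delta HA g)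
    = (1[Hob (gid i)] ⊗ γ) ∘ (Delta HA (gid i) ⊗ 1[Hob g]).
  rewrite (tens_idA _ (Hob g)).
  rewrite -(tensMr _ (1[Hob g] ⊗ (1[Hob (gid i)] ⊗ eps HA g)) (γ ⊗ 1[Hob g])).
  rewrite -(tens_idA _ (Hob (gid i)) (eps HA g)) -(tens_xchr γ (eps HA g)).
  rewrite (tens_xchl γ (eps HA g)) (tens_unitr _ HC) castm_id tensMr -compA.
  rewrite (tens_idA _ (Hob g)) -(tens_idA _ (Hob (gid i)) (1[Hob g] ⊗ eps HA g)).
  rewrite -(tensM 1[Hob (gid i) ++ Hob (gid i)] (Delta HA (gid i)) (1[Hob g] ⊗ eps HA g)).
  by rewrite id_comp (counitr _ HA).
rewrite (tens_xchl (l i) (eps HA g)) (tens_unitr _ HC) castm_id -(comp_id (lact g)) tensM.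
rewrite (eq_comp3 _ counit_step) (tens_xchl (lact g) (l i)) (tens_unitr _ HC) castm_id.
rewrite (tens_idA _ (Hob g)) compA -(compA (lact g)).
rewrite -(tensMr (Hob (gid i)) (1[Hob g] ⊗ l i) γ).
by rewrite braid_counit lact_cointegral.
Qed.

Lemma coform_form_snake {i j} (g : ghom G i j) :
  (1[Hob g] ⊗ form HA l g) ∘ (coform HA L g ⊗ 1[Hob g]) = 1[Hob g].
Proof.
rewrite -[LHS]comp_id -[X in _ ∘ X = _](counitl _ HA _ _ g) compA.
rewrite -(compA _ (coform HA L g ⊗ _)) -tensMl.
rewrite /coform -(compA (Delta HA g)) -lact_integral (compA (Delta HA g)) tensMl.
rewrite compA -(compA _ _ (Delta HA g)).
have -> : (L _ _ (gid i) ⊗ 1[Hob g]) ⊗ 1[Hob g] ∘ Delta HA g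
          = (1[Hob (gid i)] ⊗ Delta HA g) ∘ (L _ _ (gid i) ⊗ 1[Hob g]).
  rewrite (tens_assoc _ HC) castm_id tens_idm -[in LHS](tens_nil_l (Delta HA g)).
  by rewrite -(tens_xchl (L _ _ (gid i)) (Delta HA g)) tens_xchr.
rewrite compA snake_lactE lact_cointegral_braid_counit.
transitivity ((l i ∘ L _ _ (gid i)) ⊗ 1[Hob g]).
  exact: eq_sym (tensMl (Hob g) (l i) (L _ _ (gid i))).
by rewrite HlL tens_idm.
Qed.

(* [form HA l g] is [lpair g ∘ (1 ⊗ ant HA g)] up to associativity. *)
Definition lpair {i j} (g : ghom G i j) : Mor C (Hob g ++ Hob (ginv g)) [] :=
  l i ∘ hcast C (ginvr G g) ∘ mul HA g (ginv g).

Lemma snake_lpair {i j} (g : ghom G i j) :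
  (1[Hob g] ⊗ lpair g) ∘ (coform HA L g ⊗ 1[Hob (ginv g)]) = antinv HA g.
Proof.
have snake_ant :
    (1[Hob g] ⊗ lpair g) ∘ (coform HA L g ⊗ 1[Hob (ginv g)]) ∘ ant HA g = 1[Hob g].
  rewrite -[RHS](coform_form_snake g) /form -compA.
  have -> : (coform HA L g ⊗ 1[Hob (ginv g)]) ∘ ant HA g
            = (1[Hob g ++ Hob g] ⊗ ant HA g) ∘ (coform HA L g ⊗ 1[Hob g]).
    rewrite -[in LHS](tens_nil_l (ant HA g)) -(tens_xchl (coform HA L g) (ant HA g)).
    exact: (tens_xchr (coform HA L g) (ant HA g)).
  rewrite [in LHS]compA (tens_idA _ (Hob g) (ant HA g)).
  rewrite -(tensMr (Hob g) (lpair g) (1[Hob g] ⊗ ant HA g)).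
  by rewrite /lpair !compA.
by rewrite -[LHS]comp_id -[X in _ ∘ X = _](antinv_r _ HA _ _ g) compA snake_ant id_comp.
Qed.

Lemma form_mul {i j k} (g : ghom G i j) (h : ghom G j k) :
  form HA l (gcomp g h) ∘ (mul HA g h ⊗ 1[Hob (gcomp g h)])
  = lpair g ∘ (1[Hob g] ⊗
      (hcast C (gcomp_cancel G i j k g h) ∘ (mul HA h (gcomp (ginv h) (ginv g))
         ∘ (1[Hob h] ⊗ (hcast C (ginv_comp G i j k g h) ∘ ant HA (gcomp g h)))))).
Proof.
rewrite /form /lpair !compA (eq_comp2 _ (tens_swap _ _)) !compA.
rewrite (eq_comp2 _ (mulA _ _ _)) !compA (tens_idA _ (Hob h)).
rewrite [in RHS](tensMr (Hob h)) [in RHS]compA [in RHS](eq_comp2 _ (mul_hcastr _)).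
rewrite [in RHS]tensMr [in RHS]tensMr !compA (eq_comp2 _ (mul_hcastr _)).
rewrite !(eq_comp2 _ (hcast_trans _ _)) !compA [in RHS]tensMr !compA (eq_comp2 _ (mul_hcastr _)).
rewrite !compA !(eq_comp2 _ (hcast_trans _ _)).
by congr (_ ∘ _ ∘ _ ∘ _ ∘ _); apply: hcast_irr.
Qed.

Lemma rot_Delta {i j} (g : ghom G i j) :
  rot HA l L g g [] (Hob g) (Delta HA g) = Delta HA g.
Proof.
rewrite /rot castm_id.
have coassoc_step :
    ((1[Hob g] ⊗ Delta HA g) ⊗ 1[Hob g]) ∘ (coform HA L g ⊗ 1[[] ++ Hob g])
    = (Delta HA g ⊗ 1[Hob g ++ Hob g]) ∘ (coform HA L g ⊗ 1[Hob g]).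
  rewrite -(tensMl (Hob g) (1[Hob g] ⊗ Delta HA g) (coform HA L g)) /coform compA.
  rewrite -(coassoc _ HA) -compA tensMl.
  by rewrite (tens_assoc _ HC _ _ _ _ _ _ (Delta HA g) 1[Hob g] 1[Hob g]) castm_id tens_idm.
have xch_step :
    (1[Hob g ++ Hob g] ⊗ form HA l g) ∘ (Delta HA g ⊗ 1[Hob g ++ Hob g])
    = Delta HA g ∘ (1[Hob g] ⊗ form HA l g).
  rewrite -(tens_xchr (Delta HA g) (form HA l g)).
  by rewrite tens_xchl (tens_unitr _ HC) castm_id.
by rewrite coassoc_step compA xch_step -compA coform_form_snake comp_id.
Qed.

Lemma rot_mul {i j k} (g : ghom G i j) (h : ghom G j k) :
  rot HA l L g (gcomp g h) (Hob h) [] (mul HA g h)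
  = antinv HA g
    ∘ (hcast C (gcomp_cancel G i j k g h)
       ∘ (mul HA h (gcomp (ginv h) (ginv g))
          ∘ (1[Hob h] ⊗ (hcast C (ginv_comp G i j k g h) ∘ ant HA (gcomp g h))))).
Proof.
rewrite /rot castm_id.
set T := hcast C (gcomp_cancel G i j k g h) ∘ _.
have form_step :
    (1[Hob g ++ []] ⊗ form HA l (gcomp g h))
    ∘ ((1[Hob g] ⊗ mul HA g h) ⊗ 1[Hob (gcomp g h)])
    = 1[Hob g] ⊗ (lpair g ∘ (1[Hob g] ⊗ T)).
  rewrite (tens_assoc _ HC) castm_id.
  rewrite -(tensMr (Hob g) (form HA l (gcomp g h)) (mul HA g h ⊗ 1[Hob (gcomp g h)])).
  by rewrite form_mul.
have xch_step :
    (1[Hob g] ⊗ (1[Hob g] ⊗ T)) ∘ (coform HA L g ⊗ 1[Hob h ++ Hob (gcomp g h)])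
    = (coform HA L g ⊗ 1[Hob (ginv g)]) ∘ T.
  rewrite -(tens_idA _ (Hob g) T) -(tens_xchr (coform HA L g) T).
  by rewrite tens_xchl tens_nil_l.
by rewrite compA form_step tensMr -compA xch_step compA snake_lpair.
Qed.

End Integrals.
End HopfGAlgebra.

Theorem lemma5p7 (G : Groupoid) (C : BCat (gen G)) (HC : IsBraidedStrict C)
  (HA : HopfGAlg C)
  (l : forall i : gob G, Mor C (Hob (gid i)) [])
  (L : forall i j (g : ghom G i j), Mor C [] (Hob g))
  (Hl : is_left_cointegral HA l)
  (HL : is_right_integral HA L)
  (HlL : forall i : gob G, comp C (l i) (L _ _ (gid i)) = idm C [])
  (HlSL : forall i : gob G,
      comp C (l i) (comp C (hcast C (ginv_id G i)) (comp C (ant HA (gid i)) (L _ _ (gid i))))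
      = idm C [])
  (i j k : gob G) (g : ghom G i j) (h : ghom G j k) :
  rot HA l L g g [] (Hob g) (Delta HA g) = Delta HA g
  /\
  rot HA l L g (gcomp g h) (Hob h) [] (mul HA g h)
  = comp C (antinv HA g)
      (comp C (hcast C (gcomp_cancel G i j k g h))
         (comp C (mul HA h (gcomp (ginv h) (ginv g)))
            (tens C (idm C (Hob h))
               (comp C (hcast C (ginv_comp G i j k g h)) (ant HA (gcomp g h)))))).
Proof.
split; [exact: rot_Delta | exact: rot_mul].
Qed.
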